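(* Let $\mathcal{C}$ and $\mathcal{D}$ be cartesian left-additive categories and $F:\mathcal{C}\to\mathcal{D}$ a cartesian left-additive functor. Then there is a cartesian left-additive functor $\mathbf{Lens}_A(F):\mathbf{Lens}_A(\mathcal{C})\to\mathbf{Lens}_A(\mathcal{D})$ which sends an object $(A,A')$ to $(F(A),F(A'))$ and a morphism $(f,f^* ):(A,A')\to(B,B')$ to $(F(f),\overline{f^*})$, where $\overline{f^*}$ is the composite $F(A)\times F(B')\cong F(A\times B')\xrightarrow{F(f^* )}F(A')$.
   Context: Composition is written diagrammatically. A cartesian left-additive category is a category with chosen finite products in which each hom-set is a commutative monoid (addition $+$, zero $0$) with $f;(g+h)=f;g+f;h$, $f;0=0$, and all projections are additive (a map $h$ is additive if $(x+y);h=x;h+y;h$ and $0;h=0$). A cartesian left-additive functor is a functor preserving finite products and the commutative monoid structure ($F(f+g)=F(f)+F(g)$, $F(0)=0$). A morphism $f:X\times A\to B$ is additive in the second variable if $\langle x,a_1+a_2\rangle;f=\langle x,a_1\rangle;f+\langle x,a_2\rangle;f$ and $\langle x,0\rangle;f=0$ for all $x:Z\to X$, $a_1,a_2:Z\to A$. $\mathbf{Lens}(\mathcal{C})$ has objects pairs $(A,A')$; morphisms $(A,A')\to(B,B')$ are pairs $(f,f^* )$ with $f:A\to B$, $f^*:A\times B'\to A'$; identity $(1_A,\pi_1)$; composite of $(f,f^* )$ and $(g,g^* )$ is $(f;g,\langle\pi_0,\langle\pi_0;f,\pi_1\rangle;g^*\rangle;f^* )$. $\mathbf{Lens}_A(\mathcal{C})$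 is the wide subcategory of lenses $(f,f^* )$ with $f^*$ additive in the second variable; it is cartesian left-additive, with the monoid on $(A,A')$ given by unit $(0_A,!):(1,1)\to(A,A')$ and multiplication $(+_A,\pi_2;\Delta_{A'}):(A\times A,A'\times A')\to(A,A')$. *)

From Stdlib Require Import ProofIrrelevance.

Set Implicit Arguments.

(** Composition [cmp f g] is diagrammatic: first [f], then [g]. *)
Record CLAData := {
  ob : Type;
  hom : ob -> ob -> Type;
  idm : forall A, hom A A;
  cmp : forall A B E, hom A B -> hom B E -> hom A E;
  one : ob;
  prd : ob -> ob -> ob;
  p0 : forall A B, hom (prd A B) A;
  p1 : forall A B, hom (prd A B) B;
  pr : forall Z A B, hom Z A -> hom Z B -> hom Z (prd A B);
  bang : forall A, hom A one;
  add : forall A B, hom A B -> hom A B -> hom A B;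
  zer : forall A B, hom A B }.

Arguments hom {_} _ _.
Arguments idm {_} _.
Arguments cmp {_ _ _ _} _ _.
Arguments one {_}.
Arguments prd {_} _ _.
Arguments p0 {_} _ _.
Arguments p1 {_} _ _.
Arguments pr {_ _ _ _} _ _.
Arguments bang {_} _.
Arguments add {_ _ _} _ _.
Arguments zer {_} _ _.

Record isCLA (C : CLAData) : Prop := {
  cmp_id_l : forall (A B : ob C) (f : hom A B), cmp (idm A) f = f;
  cmp_id_r : forall (A B : ob C) (f : hom A B), cmp f (idm B) = f;
  cmp_assoc : forall (A B E G : ob C) (f : hom A B) (g : hom B E) (h : hom E G),
      cmp (cmp f g) h = cmp f (cmp g h);
  pr_p0 : forall (Z A B : ob C) (f : hom Z A) (g : hom Z B), cmp (pr f g) (p0 A B) = f;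
  pr_p1 : forall (Z A B : ob C) (f : hom Z A) (g : hom Z B), cmp (pr f g) (p1 A B) = g;
  pr_uniq : forall (Z A B : ob C) (h : hom Z (prd A B)),
      pr (cmp h (p0 A B)) (cmp h (p1 A B)) = h;
  bang_uniq : forall (A : ob C) (h : hom A one), h = bang A;
  add_assoc : forall (A B : ob C) (f g h : hom A B), add (add f g) h = add f (add g h);
  add_comm : forall (A B : ob C) (f g : hom A B), add f g = add g f;
  add_0l : forall (A B : ob C) (f : hom A B), add (zer A B) f = f;
  cmp_addr : forall (A B E : ob C) (f : hom A B) (g h : hom B E),
      cmp f (add g h) = add (cmp f g) (cmp f h);
  cmp_zerr : forall (A B E : ob C) (f : hom A B), cmp f (zer B E) = zer A E;
  p0_add : forall (Z A B : ob C) (x y : hom Z (prd A B)),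
      cmp (add x y) (p0 A B) = add (cmp x (p0 A B)) (cmp y (p0 A B));
  p0_zer : forall (Z A B : ob C), cmp (zer Z (prd A B)) (p0 A B) = zer Z A;
  p1_add : forall (Z A B : ob C) (x y : hom Z (prd A B)),
      cmp (add x y) (p1 A B) = add (cmp x (p1 A B)) (cmp y (p1 A B));
  p1_zer : forall (Z A B : ob C), cmp (zer Z (prd A B)) (p1 A B) = zer Z B }.

Definition is_inverse {C : CLAData} {A B : ob C} (f : hom A B) (g : hom B A) : Prop :=
  cmp f g = idm A /\ cmp g f = idm B.

Definition canon {C D : CLAData} (Fo : ob C -> ob D)
  (Fm : forall A B, hom A B -> hom (Fo A) (Fo B)) (A B : ob C)
  : hom (Fo (prd A B)) (prd (Fo A) (Fo B)) :=
  pr (Fm _ _ (p0 A B)) (Fm _ _ (p1 A B)).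

Record isCLAFunctor (C D : CLAData) (Fo : ob C -> ob D)
  (Fm : forall A B, hom A B -> hom (Fo A) (Fo B)) : Prop := {
  F_id : forall A, Fm A A (idm A) = idm (Fo A);
  F_cmp : forall A B E (f : hom A B) (g : hom B E),
      Fm A E (cmp f g) = cmp (Fm A B f) (Fm B E g);
  F_prod : forall A B, exists g, is_inverse (canon Fo Fm A B) g;
  F_one : exists g, is_inverse (bang (Fo one)) g;
  F_add : forall A B (f g : hom A B), Fm A B (add f g) = add (Fm A B f) (Fm A B g);
  F_zer : forall A B, Fm A B (zer A B) = zer (Fo A) (Fo B) }.

Definition addsnd {C : CLAData} {X A B : ob C} (f : hom (prd X A) B) : Prop :=
  (forall Z (x : hom Z X) (a1 a2 : hom Z A),
      cmp (pr x (add a1 a2)) f = add (cmp (pr x a1) f) (cmp (pr x a2) f)) /\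
  (forall Z (x : hom Z X), cmp (pr x (zer Z A)) f = zer Z B).

Section LensA.
Variable C : CLAData.
Variable HC : isCLA C.
Implicit Types A B E X Y Z : ob C.

Lemma pr_ext Z A B (h : hom Z (prd A B)) f g :
  cmp h (p0 A B) = f -> cmp h (p1 A B) = g -> h = pr f g.
Proof. intros <- <-. symmetry; apply (pr_uniq HC). Qed.

Lemma cmp_pr Y Z A B (h : hom Y Z) (u : hom Z A) (v : hom Z B) :
  cmp h (pr u v) = pr (cmp h u) (cmp h v).
Proof.
  apply pr_ext; rewrite (cmp_assoc HC); [rewrite (pr_p0 HC) | rewrite (pr_p1 HC)]; reflexivity.
Qed.

Lemma add_pr Z A B (a c : hom Z A) (b d : hom Z B) :
  add (pr a b) (pr c d) = pr (add a c) (add b d).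
Proof.
  apply pr_ext; [rewrite (p0_add HC), !(pr_p0 HC) | rewrite (p1_add HC), !(pr_p1 HC)];
  reflexivity.
Qed.

Lemma zer_pr Z A B : zer Z (prd A B) = pr (zer Z A) (zer Z B).
Proof. apply pr_ext; [apply (p0_zer HC) | apply (p1_zer HC)]. Qed.

Lemma add_0r A B (f : hom A B) : add f (zer A B) = f.
Proof. rewrite (add_comm HC); apply (add_0l HC). Qed.

Lemma add_swap A B (a b c d : hom A B) :
  add (add a b) (add c d) = add (add a c) (add b d).
Proof.
  rewrite !(add_assoc HC); f_equal.
  rewrite <- !(add_assoc HC); f_equal; apply (add_comm HC).
Qed.

Lemma cmp_pr_p0 Z X A E (x : hom Z X) (a : hom Z A) (w : hom (prd X A) E) :
  cmp (pr x a) (pr (p0 X A) w) = pr x (cmp (pr x a) w).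
Proof. rewrite cmp_pr, (pr_p0 HC); reflexivity. Qed.

Lemma addsnd_id (A A' : ob C) : addsnd (p1 A A').
Proof.
  split; intros; rewrite !(pr_p1 HC); reflexivity.
Qed.

Lemma addsnd_comp (A A' B B' E' : ob C) (f : hom A B) (fs : hom (prd A B') A')
  (gs : hom (prd B E') B') :
  addsnd fs -> addsnd gs ->
  addsnd (cmp (pr (p0 A E') (cmp (pr (cmp (p0 A E') f) (p1 A E')) gs)) fs).
Proof.
  intros [Hf1 Hf0] [Hg1 Hg0]; split; intros;
  rewrite <- !(cmp_assoc HC), !cmp_pr_p0, <- !(cmp_assoc HC), !cmp_pr,
    <- !(cmp_assoc HC), !(pr_p0 HC), !(pr_p1 HC).
  - rewrite Hg1, Hf1; reflexivity.
  - rewrite Hg0, Hf0; reflexivity.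
Qed.

Lemma addsnd_p0 (A A' B' : ob C) : addsnd (cmp (p1 A A') (pr (idm A') (zer A' B'))).
Proof.
  split; intros; rewrite <- !(cmp_assoc HC), !(pr_p1 HC), !cmp_pr,
    !(cmp_id_r HC), !(cmp_zerr HC).
  - rewrite add_pr, add_0r; reflexivity.
  - rewrite zer_pr; reflexivity.
Qed.

Lemma addsnd_p1 (A A' B' : ob C) : addsnd (cmp (p1 A B') (pr (zer B' A') (idm B'))).
Proof.
  split; intros; rewrite <- !(cmp_assoc HC), !(pr_p1 HC), !cmp_pr,
    !(cmp_id_r HC), !(cmp_zerr HC).
  - rewrite add_pr, add_0r; reflexivity.
  - rewrite zer_pr; reflexivity.
Qed.

Lemma addsnd_pair (X X' Y' Z' : ob C) (fs : hom (prd X Y') X') (gs : hom (prd X Z') X') :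
  addsnd fs -> addsnd gs ->
  addsnd (add (cmp (pr (p0 X (prd Y' Z')) (cmp (p1 X _) (p0 Y' Z'))) fs)
              (cmp (pr (p0 X (prd Y' Z')) (cmp (p1 X _) (p1 Y' Z'))) gs)).
Proof.
  intros [Hf1 Hf0] [Hg1 Hg0]; split; intros;
  rewrite !(cmp_addr HC), <- !(cmp_assoc HC), !cmp_pr, <- !(cmp_assoc HC),
    !(pr_p0 HC), !(pr_p1 HC).
  - rewrite !(p0_add HC), !(p1_add HC), Hf1, Hg1; apply add_swap.
  - rewrite (p0_zer HC), (p1_zer HC), Hf0, Hg0; apply add_0r.
Qed.

Lemma addsnd_zer X A B : addsnd (zer (prd X A) B).
Proof. split; intros; rewrite !(cmp_zerr HC); [symmetry; apply add_0r | reflexivity]. Qed.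

Lemma addsnd_add X A B (f g : hom (prd X A) B) :
  addsnd f -> addsnd g -> addsnd (add f g).
Proof.
  intros [Hf1 Hf0] [Hg1 Hg0]; split; intros; rewrite !(cmp_addr HC).
  - rewrite Hf1, Hg1; apply add_swap.
  - rewrite Hf0, Hg0; apply add_0r.
Qed.

(** Lens_A(C): objects are pairs (A, A'); morphisms are lenses (f, f^* )
    with f^* additive in the second variable. *)
Definition LOb := (ob C * ob C)%type.

Definition LHom (X Y : LOb) : Type :=
  { l : hom (fst X) (fst Y) * hom (prd (fst X) (snd Y)) (snd X) | addsnd (snd l) }.

Definition Lid (X : LOb) : LHom X X :=
  exist _ (idm (fst X), p1 (fst X) (snd X)) (addsnd_id _ _).

Definition Lcmp (X Y Z : LOb) (f : LHom X Y) (g : LHom Y Z) : LHom X Z :=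
  exist _ (cmp (fst (proj1_sig f)) (fst (proj1_sig g)),
           cmp (pr (p0 (fst X) (snd Z))
                   (cmp (pr (cmp (p0 (fst X) (snd Z)) (fst (proj1_sig f)))
                            (p1 (fst X) (snd Z))) (snd (proj1_sig g))))
               (snd (proj1_sig f)))
    (addsnd_comp _ (proj2_sig f) (proj2_sig g)).

Definition Lone : LOb := (one, one).
Definition Lprd (X Y : LOb) : LOb := (prd (fst X) (fst Y), prd (snd X) (snd Y)).

Definition Lp0 (X Y : LOb) : LHom (Lprd X Y) X :=
  exist _ (p0 (fst X) (fst Y),
           cmp (p1 (prd (fst X) (fst Y)) (snd X)) (pr (idm (snd X)) (zer (snd X) (snd Y))))
    (addsnd_p0 _ _ _).

Definition Lp1 (X Y : LOb) : LHom (Lprd X Y) Y :=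
  exist _ (p1 (fst X) (fst Y),
           cmp (p1 (prd (fst X) (fst Y)) (snd Y)) (pr (zer (snd Y) (snd X)) (idm (snd Y))))
    (addsnd_p1 _ _ _).

Definition Lpr (X Y Z : LOb) (f : LHom X Y) (g : LHom X Z) : LHom X (Lprd Y Z) :=
  exist _ (pr (fst (proj1_sig f)) (fst (proj1_sig g)),
           add (cmp (pr (p0 (fst X) (prd (snd Y) (snd Z)))
                        (cmp (p1 (fst X) _) (p0 (snd Y) (snd Z)))) (snd (proj1_sig f)))
               (cmp (pr (p0 (fst X) (prd (snd Y) (snd Z)))
                        (cmp (p1 (fst X) _) (p1 (snd Y) (snd Z)))) (snd (proj1_sig g))))
    (addsnd_pair (proj2_sig f) (proj2_sig g)).

Definition Lbang (X : LOb) : LHom X Lone :=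
  exist _ (bang (fst X), zer (prd (fst X) one) (snd X)) (addsnd_zer _ _ _).

Definition Ladd (X Y : LOb) (f g : LHom X Y) : LHom X Y :=
  exist _ (add (fst (proj1_sig f)) (fst (proj1_sig g)),
           add (snd (proj1_sig f)) (snd (proj1_sig g)))
    (addsnd_add (proj2_sig f) (proj2_sig g)).

Definition Lzer (X Y : LOb) : LHom X Y :=
  exist _ (zer (fst X) (fst Y), zer (prd (fst X) (snd Y)) (snd X)) (addsnd_zer _ _ _).

Definition LensA : CLAData := {|
  ob := LOb; hom := LHom; idm := Lid; cmp := Lcmp; one := Lone; prd := Lprd;
  p0 := Lp0; p1 := Lp1; pr := Lpr; bang := Lbang; add := Ladd; zer := Lzer |}.

End LensA.

(** Since [F] preserves products and the
    additive structure, it preserves additive maps, and additivity of [f^*] in its second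
    variable survives the transport (see [F_addsnd]).  Functoriality reduces to
    [canon_inv; F <u, v> = <canon_inv; F u, canon_inv; F v>; canon_inv], and the comparison
    lens of a product is inverted by [(canon_inv, p1; canon)]. *)

From Stdlib Require Import ProofIrrelevance ClassicalEpsilon.
Set Implicit Arguments.

Section CLAFacts.
Variables (E : CLAData) (HE : isCLA E).

Definition additive {A B : ob E} (h : hom A B) : Prop :=
  (forall Z (x y : hom Z A), cmp (add x y) h = add (cmp x h) (cmp y h)) /\
  (forall Z, cmp (zer Z A) h = zer Z B).

Lemma additive_p0 A B : additive (p0 A B).
Proof. split; intros; [apply (p0_add HE) | apply (p0_zer HE)]. Qed.

Lemma additive_p1 A B : additive (p1 A B).
Proof. split; intros; [apply (p1_add HE) | apply (p1_zer HE)]. Qed.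

Lemma additive_pr W A B (h : hom W A) (k : hom W B) :
  additive h -> additive k -> additive (pr h k).
Proof.
  intros [Hh Hh0] [Hk Hk0]; split; intros; rewrite !(cmp_pr HE).
  - rewrite Hh, Hk; symmetry; apply (add_pr HE).
  - rewrite Hh0, Hk0; symmetry; apply (zer_pr HE).
Qed.

Lemma addsnd_p1_cmp X A B (h : hom A B) : additive h -> addsnd (cmp (p1 X A) h).
Proof.
  intros [Hh Hh0]; split; intros; rewrite <- !(cmp_assoc HE), !(pr_p1 HE); auto.
Qed.

Lemma pr_p1_cmp (Z X Y W : ob E) (x : hom Z X) (y : hom Z Y) (k : hom Y W) :
  cmp (pr x y) (cmp (p1 X Y) k) = cmp y k.
Proof. rewrite <- (cmp_assoc HE), (pr_p1 HE); reflexivity. Qed.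

Lemma add_p0_inl_p1_inr (A B : ob E) :
  add (cmp (p0 A B) (pr (idm A) (zer A B))) (cmp (p1 A B) (pr (zer B A) (idm B)))
  = idm (prd A B).
Proof.
  rewrite !(cmp_pr HE), !(cmp_id_r HE), !(cmp_zerr HE), (add_pr HE), (add_0r HE),
    (add_0l HE).
  rewrite <- (pr_uniq HE _ _ _ (idm (prd A B))), !(cmp_id_l HE); reflexivity.
Qed.

Lemma hom_eq_of_iso_one (A : ob E) : (exists g, is_inverse (bang A) g) ->
  forall Z (h k : hom Z A), h = k.
Proof.
  intros [g [Hbg _]] Z h k.
  rewrite <- (cmp_id_r HE _ _ h), <- (cmp_id_r HE _ _ k), <- Hbg, <- !(cmp_assoc HE),
    (bang_uniq HE _ (cmp h _)), (bang_uniq HE _ (cmp k _)); reflexivity.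
Qed.

Lemma inverse_unique (A B : ob E) (f : hom A B) g g' :
  is_inverse f g -> is_inverse f g' -> g = g'.
Proof.
  intros [_ Hgf] [Hfg' _].
  rewrite <- (cmp_id_r HE _ _ g), <- Hfg', <- (cmp_assoc HE), Hgf; apply (cmp_id_l HE).
Qed.

Lemma lens_ext (X Y : LOb E) (f g : LHom X Y) :
  fst (proj1_sig f) = fst (proj1_sig g) -> snd (proj1_sig f) = snd (proj1_sig g) -> f = g.
Proof.
  destruct f as [[f1 f2] pf], g as [[g1 g2] pg]; simpl; intros; subst.
  f_equal; apply proof_irrelevance.
Qed.

End CLAFacts.

Arguments additive {E A B} h.

Section LensFunctor.
Variables (C D : CLAData) (HC : isCLA C) (HD : isCLA D)
  (Fo : ob C -> ob D) (Fm : forall A B : ob C, hom A B -> hom (Fo A) (Fo B)).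
Hypothesis HF : isCLAFunctor C D Fo Fm.

Local Notation F f := (Fm _ _ f).

Definition canon_inv (A B : ob C) : hom (prd (Fo A) (Fo B)) (Fo (prd A B)) :=
  proj1_sig (constructive_indefinite_description _ (F_prod HF A B)).

Lemma canon_invP A B : is_inverse (canon Fo Fm A B) (canon_inv A B).
Proof. exact (proj2_sig (constructive_indefinite_description _ (F_prod HF A B))). Qed.

Lemma canonK A B : cmp (canon Fo Fm A B) (canon_inv A B) = idm _.
Proof. exact (proj1 (canon_invP A B)). Qed.

Lemma canon_invK A B : cmp (canon_inv A B) (canon Fo Fm A B) = idm _.
Proof. exact (proj2 (canon_invP A B)). Qed.

Lemma canon_inv_unique A B phi :
  is_inverse (canon Fo Fm A B) phi -> canon_inv A B = phi.
Proof. apply (inverse_unique HD), canon_invP. Qed.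

Lemma canon_p0 A B : cmp (canon Fo Fm A B) (p0 _ _) = F (p0 A B).
Proof. apply (pr_p0 HD). Qed.

Lemma canon_p1 A B : cmp (canon Fo Fm A B) (p1 _ _) = F (p1 A B).
Proof. apply (pr_p1 HD). Qed.

Lemma canon_inv_F_p0 A B : cmp (canon_inv A B) (F (p0 A B)) = p0 _ _.
Proof. rewrite <- canon_p0, <- (cmp_assoc HD), canon_invK; apply (cmp_id_l HD). Qed.

Lemma canon_inv_F_p1 A B : cmp (canon_inv A B) (F (p1 A B)) = p1 _ _.
Proof. rewrite <- canon_p1, <- (cmp_assoc HD), canon_invK; apply (cmp_id_l HD). Qed.

Lemma F_pr_canon X A B (u : hom X A) (v : hom X B) :
  cmp (F (pr u v)) (canon Fo Fm A B) = pr (F u) (F v).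
Proof.
  unfold canon; rewrite (cmp_pr HD), <- !(F_cmp HF), (pr_p0 HC), (pr_p1 HC); reflexivity.
Qed.

Lemma F_pr X A B (u : hom X A) (v : hom X B) :
  F (pr u v) = cmp (pr (F u) (F v)) (canon_inv A B).
Proof.
  rewrite <- F_pr_canon, (cmp_assoc HD), canonK; symmetry; apply (cmp_id_r HD).
Qed.

Lemma cmp_F_pr Z X A B (w : hom Z (Fo X)) (u : hom X A) (v : hom X B) :
  cmp w (F (pr u v)) = cmp (pr (cmp w (F u)) (cmp w (F v))) (canon_inv A B).
Proof. rewrite F_pr, <- (cmp_assoc HD), (cmp_pr HD); reflexivity. Qed.

Lemma pr_canon_inv_F_p0 A B Z (a : hom Z (Fo A)) (b : hom Z (Fo B)) :
  cmp (cmp (pr a b) (canon_inv A B)) (F (p0 A B)) = a.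
Proof. rewrite (cmp_assoc HD), canon_inv_F_p0; apply (pr_p0 HD). Qed.

Lemma pr_canon_inv_F_p1 A B Z (a : hom Z (Fo A)) (b : hom Z (Fo B)) :
  cmp (cmp (pr a b) (canon_inv A B)) (F (p1 A B)) = b.
Proof. rewrite (cmp_assoc HD), canon_inv_F_p1; apply (pr_p1 HD). Qed.

Lemma F_additive A B (h : hom A B) : additive h -> additive (F h).
Proof.
  intros [Hh Hh0]; split.
  - intros Z u v.
    assert (Euv : add u v = cmp (cmp (pr u v) (canon_inv A A)) (F (add (p0 A A) (p1 A A)))).
    { rewrite (F_add HF), (cmp_addr HD), pr_canon_inv_F_p0, pr_canon_inv_F_p1; reflexivity. }
    rewrite Euv, (cmp_assoc HD), <- (F_cmp HF), Hh, (F_add HF), (cmp_addr HD),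
      !(F_cmp HF), <- !(cmp_assoc HD), pr_canon_inv_F_p0, pr_canon_inv_F_p1; reflexivity.
  - intros Z; destruct (F_one HF) as [g _].
    assert (E0 : zer Z (Fo A) = cmp (bang Z) (cmp g (F (zer one A)))).
    { rewrite (F_zer HF), !(cmp_zerr HD); reflexivity. }
    rewrite E0, !(cmp_assoc HD), <- (F_cmp HF), Hh0, (F_zer HF), !(cmp_zerr HD);
      reflexivity.
Qed.

Lemma canon_additive A B : additive (canon Fo Fm A B).
Proof.
  apply (additive_pr HD); apply F_additive; [apply (additive_p0 HC) | apply (additive_p1 HC)].
Qed.

Lemma F_addsnd X B' A' (fs : hom (prd X B') A') :
  addsnd fs -> addsnd (cmp (canon_inv X B') (F fs)).
Proof.
  intros [Hfs Hfs0]; split.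
  - intros Z x a1 a2.
    (* [x], [a1], [a2] and [a1 + a2] all factor through [w] via [F], so the
       additivity of [fs] in [C] can be transported along [F]. *)
    pose (w := cmp (pr x (cmp (pr a1 a2) (canon_inv B' B'))) (canon_inv X (prd B' B'))).
    assert (Ex : cmp w (F (p0 X _)) = x) by apply pr_canon_inv_F_p0.
    assert (Ea1 : cmp w (F (cmp (p1 X _) (p0 B' B'))) = a1).
    { unfold w; rewrite (F_cmp HF), <- (cmp_assoc HD), pr_canon_inv_F_p1.
      apply pr_canon_inv_F_p0. }
    assert (Ea2 : cmp w (F (cmp (p1 X _) (p1 B' B'))) = a2).
    { unfold w; rewrite (F_cmp HF), <- (cmp_assoc HD), pr_canon_inv_F_p1.
      apply pr_canon_inv_F_p1. }
    assert (Ea12 : cmp w (F (add (cmp (p1 X _) (p0 B' B')) (cmp (p1 X _) (p1 B' B'))))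
                   = add a1 a2).
    { rewrite (F_add HF), (cmp_addr HD), Ea1, Ea2; reflexivity. }
    rewrite <- !(cmp_assoc HD), <- Ea12, <- Ex, <- Ea1, <- Ea2, <- !cmp_F_pr,
      !(cmp_assoc HD), <- !(F_cmp HF), Hfs, (F_add HF), (cmp_addr HD); reflexivity.
  - intros Z x.
    assert (Ex0 : cmp (pr x (zer Z (Fo B'))) (canon_inv X B')
                  = cmp x (F (pr (idm X) (zer X B')))).
    { rewrite cmp_F_pr, (F_id HF), (F_zer HF), (cmp_id_r HD), (cmp_zerr HD); reflexivity. }
    rewrite <- (cmp_assoc HD), Ex0, (cmp_assoc HD), <- (F_cmp HF), Hfs0, (F_zer HF),
      (cmp_zerr HD); reflexivity.
Qed.

Lemma F_add_p0_inl_p1_inr A B :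
  add (cmp (F (p0 A B)) (F (pr (idm A) (zer A B))))
      (cmp (F (p1 A B)) (F (pr (zer B A) (idm B)))) = idm _.
Proof.
  rewrite <- !(F_cmp HF), <- (F_add HF), (add_p0_inl_p1_inr HC); apply (F_id HF).
Qed.

Lemma canon_inv_F_p1_cmp X A B (k : hom A B) :
  cmp (canon_inv X A) (F (cmp (p1 X A) k)) = cmp (p1 _ _) (F k).
Proof. rewrite (F_cmp HF), <- (cmp_assoc HD), canon_inv_F_p1; reflexivity. Qed.

Definition LensF (X Y : LOb C) (f : LHom X Y) :
  @LHom D (Fo (fst X), Fo (snd X)) (Fo (fst Y), Fo (snd Y)) :=
  exist _ (F (fst (proj1_sig f)), cmp (canon_inv (fst X) (snd Y)) (F (snd (proj1_sig f))))
    (F_addsnd (proj2_sig f)).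

Local Notation LensFo := (fun X : LOb C => (Fo (fst X), Fo (snd X))).

Lemma LensF_id (X : ob (LensA HC)) : LensF (idm X) = @idm (LensA HD) (LensFo X).
Proof.
  apply lens_ext; simpl; [apply (F_id HF) | apply canon_inv_F_p1].
Qed.

Lemma LensF_cmp (X Y Z : ob (LensA HC)) (f : hom X Y) (g : hom Y Z) :
  LensF (cmp f g) = @cmp (LensA HD) _ _ _ (LensF f) (LensF g).
Proof.
  apply lens_ext; simpl; [apply (F_cmp HF) |].
  rewrite (F_cmp HF), <- (cmp_assoc HD), cmp_F_pr, canon_inv_F_p0, (F_cmp HF),
    <- (cmp_assoc HD), cmp_F_pr, canon_inv_F_p1, (F_cmp HF), <- (cmp_assoc HD),
    canon_inv_F_p0, !(cmp_assoc HD); reflexivity.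
Qed.

Definition LensF_canon_inv (X Y : LOb C) :
  @LHom D (prd (Fo (fst X)) (Fo (fst Y)), prd (Fo (snd X)) (Fo (snd Y)))
          (Fo (prd (fst X) (fst Y)), Fo (prd (snd X) (snd Y))) :=
  exist _ (canon_inv (fst X) (fst Y), cmp (p1 _ _) (canon Fo Fm (snd X) (snd Y)))
    (addsnd_p1_cmp HD _ (canon_additive _ _)).

Lemma LensF_prod (X Y : ob (LensA HC)) :
  exists g, is_inverse (canon (C:=LensA HC) (D:=LensA HD) LensFo LensF X Y) g.
Proof.
  exists (LensF_canon_inv X Y); split; apply lens_ext; simpl.
  - apply canonK.
  - rewrite !canon_inv_F_p1_cmp, !(pr_p1_cmp HD), (cmp_addr HD), <- !(cmp_assoc HD),
      !(pr_p1 HD).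
    rewrite !(cmp_assoc HD), <- (cmp_addr HD), <- !(cmp_assoc HD _ _ _ _ (canon Fo Fm _ _)),
      canon_p0, canon_p1, F_add_p0_inl_p1_inr; apply (cmp_id_r HD).
  - apply canon_invK.
  - rewrite !canon_inv_F_p1_cmp, !(pr_p1_cmp HD), (cmp_addr HD), <- !(cmp_assoc HD),
      !(pr_p1 HD).
    rewrite (proj1 (canon_additive _ _)), !(cmp_assoc HD), !F_pr_canon, !(F_id HF),
      !(F_zer HF), <- (cmp_addr HD), (add_p0_inl_p1_inr HD); apply (cmp_id_r HD).
Qed.

Lemma LensF_add (X Y : ob (LensA HC)) (f g : hom X Y) :
  LensF (add f g) = @add (LensA HD) _ _ (LensF f) (LensF g).
Proof.
  apply lens_ext; simpl; rewrite (F_add HF); [| rewrite (cmp_addr HD)]; reflexivity.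
Qed.

Lemma LensF_zer (X Y : ob (LensA HC)) :
  LensF (zer X Y) = @zer (LensA HD) (LensFo X) (LensFo Y).
Proof.
  apply lens_ext; simpl; rewrite (F_zer HF); [| rewrite (cmp_zerr HD)]; reflexivity.
Qed.

Lemma LensF_one : exists g, is_inverse (@bang (LensA HD) (LensFo (@one (LensA HC)))) g.
Proof.
  destruct (F_one HF) as [g [Hbg Hgb]].
  exists (exist (fun l => addsnd (snd l)) (g, zer (prd one (Fo one)) one) (addsnd_zer HD _ _ _)
      : @hom (LensA HD) one (Fo one, Fo one)).
  split; apply lens_ext; simpl.
  - exact Hbg.
  - apply (hom_eq_of_iso_one HD); exists g; split; assumption.
  - exact Hgb.
  - rewrite (bang_uniq HD _ (cmp _ _)), (bang_uniq HD _ (p1 _ _)); reflexivity.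
Qed.

End LensFunctor.

Theorem propositionB11 (C D : CLAData) (HC : isCLA C) (HD : isCLA D)
  (Fo : ob C -> ob D) (Fm : forall A B : ob C, hom A B -> hom (Fo A) (Fo B)) :
  isCLAFunctor C D Fo Fm ->
  exists Gm : forall X Y : ob (LensA HC),
      hom X Y -> @hom (LensA HD) (Fo (fst X), Fo (snd X)) (Fo (fst Y), Fo (snd Y)),
    isCLAFunctor (LensA HC) (LensA HD) (fun X => (Fo (fst X), Fo (snd X))) Gm /\
    forall (X Y : ob (LensA HC)) (f : hom X Y)
      (phi : hom (prd (Fo (fst X)) (Fo (snd Y))) (Fo (prd (fst X) (snd Y)))),
      is_inverse (canon Fo Fm (fst X) (snd Y)) phi ->
      proj1_sig (Gm X Y f) = (Fm _ _ (fst (proj1_sig f)), cmp phi (Fm _ _ (snd (proj1_sig f)))).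
Proof.
  intro HF.
  exists (LensF HC HD HF); split.
  - constructor.
    + apply LensF_id.
    + apply LensF_cmp.
    + apply LensF_prod.
    + exact (LensF_one HC HD HF).
    + apply LensF_add.
    + apply LensF_zer.
  - intros X Y f phi Hphi; simpl; rewrite (canon_inv_unique HD HF _ _ Hphi); reflexivity.
Qed.
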